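(* Let $k$ be a number field, $\mathcal G$ a finite group, $H$ a finite abelian group, $\mu:\mathcal G\to\mathrm{Aut}(H)$ an action, $k_1/k$ a Galois extension with group identified with $\mathcal G$, and $\tau\in H$. Then $k_1Z_{k_1/k,\mu,\tau}=k_1(\zeta_{o(\tau)})$.
   Context: $o(\tau)$ is the order of $\tau$ and $\zeta_t$ a primitive $t$-th root of unity. Let $\nu_{k,\tau}:\mathrm{Gal}(k(\zeta_{o(\tau)})/k)\to(\mathbb Z/o(\tau))^*$ be given by $g(\zeta_{o(\tau)})=\zeta_{o(\tau)}^{\nu_{k,\tau}(g)}$; $\tilde G_{k,\mu,\tau}=\{(g_1,g_2)\in\mathcal G\times\mathrm{Gal}(k(\zeta_{o(\tau)})/k):\mu(g_1)(\tau)=\tau^{\nu_{k,\tau}(g_2)}\}$. Identify $\mathrm{Gal}(k_1(\zeta_{o(\tau)})/k)$ with its image in $\mathcal G\times\mathrm{Gal}(k(\zeta_{o(\tau)})/k)$ via $g\mapsto(g|_{k_1},g|_{k(\zeta_{o(\tau)})})$, put $\tilde G_{k_1/k,\mu,\tau}=\tilde G_{k,\mu,\tau}\cap\mathrm{Gal}(k_1(\zeta_{o(\tau)})/k)$, and let $Z_{k_1/k,\mu,\tau}$ be its fixed field in $k_1(\zeta_{o(\tau)})$. *)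

From HB Require Import structures.
From mathcomp Require Import all_boot all_order all_algebra all_fingroup all_field.
From mathcomp Require Import boolp.
Set Implicit Arguments. Unset Strict Implicit. Unset Printing Implicit Defensive.
Import GRing.Theory.
Local Open Scope ring_scope.
Local Open Scope group_scope.

(* Setting: L a finite Galois-closed extension of Q (splittingFieldType rat) in which
   all fields live; k k1 : {subfield L}. zeta is a primitive #[tau]-th root of unity in L. *)

Section Tilde.
Variables (L : splittingFieldType rat) (k k1 : {subfield L}) (zeta : L).
Variables (gT hT : finGroupType) (G : {group gT}).
Variables (iota : {morphism 'Gal(k1 / k) >-> gT}) (mu : {morphism G >-> {perm hT}}).
Variable tau : hT.

Definition k1zeta : {subfield L} := <<k1; zeta>>%AS.

(* nu_{k,tau}(g2) = n  <->  g2(zeta) = zeta^n ; for g in Gal(k1(zeta)/k) the image in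
   G x Gal(k(zeta)/k) is (g|_{k1}, g|_{k(zeta)}), and g|_{k(zeta)}(zeta) = g(zeta). *)
Definition in_Gtilde (g : gal_of k1zeta) : Prop :=
  exists2 h, h \in 'Gal(k1 / k) &
    (forall x, x \in k1 -> h x = g x) /\
    (exists n : nat, (g zeta = zeta ^+ n)%R /\ mu (iota h) tau = tau ^+ n).

Definition Gtilde : {set gal_of k1zeta} :=
  [set g in 'Gal(k1zeta / k) | `[< in_Gtilde g >] ].

Definition Zfield : {vspace L} := fixedField Gtilde.
End Tilde.

(* An automorphism g of k1(zeta) lying in tilde G and fixing k1 has trivial first
   component, so mu acts trivially on tau and tau = tau^n where g(zeta) = zeta^n;
   hence n = 1 mod o(tau) and g also fixes zeta, i.e. g = 1.  By the Galois
   correspondence, k1 Z is the fixed field of tilde G /\ Gal(k1(zeta)/k1) = 1. *)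

From HB Require Import structures.
From mathcomp Require Import all_boot all_order all_algebra all_fingroup all_solvable all_field.
From mathcomp Require Import boolp.
Import GRing.Theory.
Local Open Scope ring_scope.
Local Open Scope group_scope.

Lemma prodv_fixedField_eq {F : fieldType} {L : splittingFieldType F}
    {E K : {subfield L}} (A : {group gal_of E}) :
  (K <= E)%VS -> A :&: 'Gal(E / K) \subset [1] -> (K * fixedField A)%VS = E.
Proof.
move=> sKE trivA; set M := (K * fixedField A)%AS.
have sME : (M <= E)%VS by rewrite prodv_sub ?fixedField_bound.
apply/eqP; rewrite eqEsubv sME /=.
have galME : galois M E.
  by apply: (galoisS (K := fixedField A)); rewrite ?field_subvMl ?fixedField_galois.
have sGalMA : 'Gal(E / M) \subset A.
  by rewrite -(genGid A) -gal_generated galS ?field_subvMl.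
have sGalMK : 'Gal(E / M) \subset 'Gal(E / K) by rewrite galS ?field_subvMr.
move/galois_fixedField: galME => <-; apply/subvP=> x Ex.
apply/fixedFieldP=> // g galg.
have /set1gP -> : g \in [1].
  by apply: (subsetP trivA); rewrite inE (subsetP sGalMA) ?(subsetP sGalMK).
by rewrite gal_id.
Qed.

Section Gtilde.

Variables (L : splittingFieldType rat) (k k1 : {subfield L}) (zeta : L).
Variables (gT hT : finGroupType) (G : {group gT}) (H : {group hT}).
Variables (iota : {morphism 'Gal(k1 / k) >-> gT}) (mu : {morphism G >-> {perm hT}}).
Variable tau : hT.

Local Notation E := (k1zeta k1 zeta).

Lemma Gtilde_group_set :
  isom 'Gal(k1 / k) G iota -> mu @* G \subset Aut H -> tau \in H ->
  group_set (Gtilde zeta iota mu tau).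
Proof.
move=> /isomP[_ imG] sAut Htau.
have AutH a : a \in G -> mu a \in Aut H.
  by move=> Ga; apply: (subsetP sAut); rewrite mem_morphim.
have iotaG h : h \in 'Gal(k1 / k) -> iota h \in G by move=> Gh; rewrite -imG mem_morphim.
apply/group_setP; split.
  rewrite inE group1; apply/asboolP; exists 1 => //; split=> [x _|]; first by rewrite !gal_id.
  by exists 1%N; rewrite gal_id expr1 expg1 !morph1 perm1.
move=> g1 g2; rewrite !inE => /andP[Gg1 /asboolP[h1 Gh1 [e1 [n1 [z1 t1]]]]].
move=> /andP[Gg2 /asboolP[h2 Gh2 [e2 [n2 [z2 t2]]]]].
rewrite groupM //=; apply/asboolP; exists (h1 * h2); first exact: groupM.
split=> [x k1x|].
  by rewrite !galM ?(subvP (subv_adjoin k1 zeta)) // -e1 ?e2 ?memv_gal.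
exists (n2 * n1)%N; split; first by rewrite galM ?memv_adjoin // z1 rmorphXn /= z2 -exprM.
(* mu (iota h2) is a group automorphism of H, so it commutes with powers of tau *)
rewrite !morphM ?iotaG ?mem_morphim //= permM t1.
by rewrite -(autmE (AutH _ (iotaG _ Gh2))) morphX //= autmE t2 -expgM mulnC.
Qed.

Lemma Gtilde_fixing_k1_fixes_zeta :
  (#[tau]).-primitive_root zeta ->
  forall g, g \in Gtilde zeta iota mu tau -> g \in 'Gal(E / k1) -> g zeta = zeta.
Proof.
move=> prim g; rewrite inE => /andP[_ /asboolP[h _ [eh [n [zn tn]]]]] galg.
have h1 : h = 1.
  by apply/eqP/gal_eqP=> x k1x; rewrite eh // (fixed_gal (subv_adjoin k1 zeta)) // gal_id.
move: tn; rewrite h1 !morph1 perm1 -{1}(expg1 tau) => /eqP.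
rewrite eq_expg_mod_order => /eqP n1.
by rewrite zn -(prim_expr_mod prim) -n1 prim_expr_mod.
Qed.

Lemma Gtilde_Gal_k1_trivial :
  (#[tau]).-primitive_root zeta ->
  Gtilde zeta iota mu tau :&: 'Gal(E / k1) \subset [1].
Proof.
move=> prim; apply/subsetP=> g /setIP[Ag galg]; apply/set1gP/eqP.
rewrite (gal_adjoin_eq galg (group1 _)) gal_id.
by rewrite (Gtilde_fixing_k1_fixes_zeta prim _ Ag galg).
Qed.

End Gtilde.

Arguments Gtilde_group_set {L k k1} zeta {gT hT G H iota mu tau}.
Arguments Gtilde_Gal_k1_trivial {L k k1 zeta gT hT G iota mu tau}.

Theorem mainTheorem15
  (L : splittingFieldType rat) (k k1 : {subfield L})
  (gT hT : finGroupType) (G : {group gT}) (H : {group hT})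
  (iota : {morphism 'Gal(k1 / k) >-> gT})
  (mu : {morphism G >-> {perm hT}})
  (tau : hT) (zeta : L) :
  galois k k1 ->
  isom 'Gal(k1 / k) G iota ->
  abelian H ->
  (mu @* G \subset Aut H)%g ->
  tau \in H ->
  (#[tau]%g).-primitive_root zeta ->
  (k1 * Zfield zeta iota mu tau)%VS = (k1zeta k1 zeta)%VS.
Proof.
move=> _ isoI _ sAut Htau prim.
pose A := Group (Gtilde_group_set zeta isoI sAut Htau).
have := prodv_fixedField_eq A (subv_adjoin k1 zeta) (Gtilde_Gal_k1_trivial prim).
by rewrite /Zfield.
Qed.
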